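(* Let $(X,d)$ be a uniformly locally finite metric space and let $h,k\colon X\to\mathbb{R}$ be arbitrary maps. Regard $h$ and $k$ as (possibly unbounded) self-adjoint multiplication operators on $\ell_2(X)$ and let $\sigma_h,\sigma_k$ be the pre-flows on $\mathrm{C}^*_u(X)$ given by $\sigma_{h,t}(a)=e^{ith}ae^{-ith}$ and $\sigma_{k,t}(a)=e^{itk}ae^{-itk}$. The following are equivalent: (1) $h$ and $k$ are close, i.e. $\sup_{x\in X}|h_x-k_x|<\infty$; (2) the pre-flows $\sigma_h$ and $\sigma_k$ are inner perturbations of each other; (3) the pre-flows $\sigma_h$ and $\sigma_k$ are cocycle perturbations of each other.
   Context: A metric space is uniformly locally finite if $\sup_x|B_r(x)|<\infty$ for each $r>0$. A partial translation is a bijection $f\colon\mathrm{dom}(f)\subseteq X\to\mathrm{ran}(f)\subseteq X$ with $\sup_{x\in\mathrm{dom}(f)}d(x,f(x))<\infty$; $v_f\delta_x=\delta_{f(x)}$ for $x\in\mathrm{dom}(f)$, $v_f\delta_x=0$ otherwise; $\mathrm{C}^*_u(X)$ is the $\mathrm{C}^*$-subalgebra of $\mathcal{B}(\ell_2(X))$ generated by all $v_f$. The multiplication operator of $h$ has domain $\{\xi:\sum_x|h_x\xi_x|^2<\infty\}$ and acts by $(h\xi)_x=h_x\xi_x$. A pre-flow on a unital $\mathrm{C}^*$-algebra $A$ is a group homomorphism $\sigma\colon\mathbb{R}\to\mathrm{Aut}(A)$. A cocycle for $\sigma$ is a norm-continuous family of unitaries $(u_t)_{t\in\mathbb{R}}$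 in $A$ with $u_{t+s}=u_t\sigma_t(u_s)$ for all $t,s$; then $\rho_t(a)=u_t\sigma_t(a)u_t^*$ defines a cocycle perturbation $\rho$ of $\sigma$; if moreover such a cocycle can be chosen differentiable at $0$, $\rho$ is an inner perturbation of $\sigma$. *)

From HB Require Import structures.
From mathcomp Require Import all_boot all_order all_algebra.
From mathcomp Require Import all_classical all_reals all_analysis.
From mathcomp Require Import complex.
Set Implicit Arguments. Unset Strict Implicit. Unset Printing Implicit Defensive.
Import Order.TTheory GRing.Theory Num.Theory.
Local Open Scope ring_scope.
Local Open Scope classical_set_scope.

Section Defs.
Variables (R : realType) (X : choiceType).
Local Notation C := (R[i]).

Definition is_metric (d : X -> X -> R) : Prop :=
  [/\ forall x y, 0 <= d x y,
      forall x y, d x y = 0 <-> x = y,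
      forall x y, d x y = d y x &
      forall x y z, d x z <= d x y + d y z].

Definition unif_loc_finite (d : X -> X -> R) : Prop :=
  forall r : R, 0 < r -> exists N : nat, forall (x : X) (s : seq X),
    uniq s -> (forall y, y \in s -> d x y <= r) -> (size s <= N)%N.

Definition sqmod (z : C) : R := (complex.Re z) ^+ 2 + (complex.Im z) ^+ 2.

Definition vec := X -> C.

Definition in_l2 (xi : vec) : Prop :=
  exists M : R, forall s : seq X, uniq s -> \sum_(x <- s) sqmod (xi x) <= M.

Definition l2nsq (xi : vec) : R :=
  sup [set r : R | exists s : seq X, uniq s /\ r = \sum_(x <- s) sqmod (xi x)].

(* operators: maps on vectors, only their restriction to l2 matters *)
Definition op := vec -> vec.

Definition opeq (T S : op) : Prop := forall xi, in_l2 xi -> T xi = S xi.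

(* ||T - S|| <= e  (as operators on l2(X), including that T - S maps l2 to l2) *)
Definition opdist_le (T S : op) (e : R) : Prop :=
  forall xi, in_l2 xi ->
    in_l2 (fun x => T xi x - S xi x) /\
    l2nsq (fun x => T xi x - S xi x) <= e ^+ 2 * l2nsq xi.

Definition opzero : op := fun _ _ => 0.

Definition bounded_op (T : op) : Prop := exists c : R, opdist_le T opzero c.

(* a partial bijection is encoded by f : X -> option X (f x = None iff x is
   not in the domain), injective on its domain, with bounded displacement *)
Definition partial_translation (d : X -> X -> R) (f : X -> option X) : Prop :=
  (forall x1 x2 y, f x1 = Some y -> f x2 = Some y -> x1 = x2) /\
  exists c : R, forall x y, f x = Some y -> d x y <= c.

(* v_f delta_x = delta_{f x} for x in dom f, 0 otherwise *)
Definition vop (f : X -> option X) : op := fun xi y =>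
  match pselect (exists x, f x = Some y) with
  | left e => xi (projT1 (cid e))
  | right _ => 0
  end.

Definition comb (s : seq (C * (X -> option X))) : op :=
  fun xi y => \sum_(p <- s) p.1 * vop p.2 xi y.

(* C*_u(X): the norm closure of the *-algebra generated by the v_f, which is
   the linear span of the v_f (v_f^* = v_{f^-1}, v_f v_g = v_{f o g}) *)
Definition in_CuX (d : X -> X -> R) (T : op) : Prop :=
  forall e : R, 0 < e -> exists s : seq (C * (X -> option X)),
    (forall i, (i < size s)%N ->
       partial_translation d (nth (0, fun _ => None) s i).2) /\
    opdist_le T (comb s) e.

Definition unitary_op (u : op) : Prop :=
  (forall xi, in_l2 xi -> in_l2 (u xi) /\ l2nsq (u xi) = l2nsq xi) /\
  (forall eta, in_l2 eta -> exists xi, in_l2 xi /\ u xi = eta) /\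
  (forall (a b : C) xi eta, in_l2 xi -> in_l2 eta ->
     u (fun x => a * xi x + b * eta x) = (fun x => a * u xi x + b * u eta x)).

Definition expi (th : R) : C := (cos th +i* sin th)%C.

Definition phase (h : X -> R) (t : R) : op := fun xi x => expi (t * h x) * xi x.

Definition preflow (h : X -> R) (t : R) (a : op) : op :=
  fun xi => phase h t (a (phase h (- t) xi)).

Definition norm_continuous (u : R -> op) : Prop :=
  forall t e, 0 < e -> exists2 delta : R, 0 < delta &
    forall s, `|s - t| < delta -> opdist_le (u s) (u t) e.

Definition differentiable_at0 (u : R -> op) : Prop :=
  exists2 D : op, bounded_op D &
    forall e, 0 < e -> exists2 delta : R, 0 < delta &
      forall t, t != 0 -> `|t| < delta ->
        opdist_le (fun xi x => (t^-1)%:C%C * (u t xi x - u 0 xi x)) D e.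

Definition is_cocycle (d : X -> X -> R) (sigma : R -> op -> op) (u : R -> op)
  : Prop :=
  [/\ forall t, in_CuX d (u t) /\ unitary_op (u t),
      norm_continuous u &
      forall t s, opeq (u (t + s)) (fun xi => u t (sigma t (u s) xi))].

(* rho_t(a) = u_t sigma_t(a) u_t^*  on C*_u(X), written as
   rho_t(a) u_t = u_t sigma_t(a)  (u_t unitary, so u_t^* = u_t^-1) *)
Definition perturbed_by (d : X -> X -> R) (sigma rho : R -> op -> op)
  (u : R -> op) : Prop :=
  forall t a, in_CuX d a -> opeq (fun xi => rho t a (u t xi))
                                 (fun xi => u t (sigma t a xi)).

Definition cocycle_perturbation (d : X -> X -> R) (sigma rho : R -> op -> op)
  : Prop :=
  exists u, is_cocycle d sigma u /\ perturbed_by d sigma rho u.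

Definition inner_perturbation (d : X -> X -> R) (sigma rho : R -> op -> op)
  : Prop :=
  exists u, [/\ is_cocycle d sigma u, differentiable_at0 u &
                perturbed_by d sigma rho u].

Definition close_maps (h k : X -> R) : Prop :=
  exists M : R, forall x, `|h x - k x| <= M.

End Defs.

From Pilot Require Import Defs.
From HB Require Import structures.
From mathcomp Require Import all_boot all_order all_algebra.
From mathcomp Require Import all_classical all_reals all_analysis.
From mathcomp Require Import complex.
From mathcomp Require Import ring lra zify.
Import Order.TTheory GRing.Theory Num.Theory.
Import numFieldNormedType.Exports.
Local Open Scope ring_scope.
Set Implicit Arguments. Unset Strict Implicit. Unset Printing Implicit Defensive.

(* If k - h is bounded, u_t = e^{it(k-h)} is a unitary cocycle for sigma_h that
   conjugates sigma_h into sigma_k, since multiplication operators commute. It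
   lies in C*_u(X) because a bounded multiplication operator is a norm limit of
   finite combinations of partial identities on level sets; it is norm
   continuous and differentiable at 0 (with derivative i(k-h)) by the bounds
   |e^{ia} - e^{ib}| <= |a - b| and |e^{ia} - 1 - ia| <= a^2.
   Conversely, testing rho_t(a) u_t = u_t sigma_t(a) on the matrix units
   e_{yz} shows that any cocycle u_t is diagonal with unimodular entries and
   u_t(y) = e^{it((k-h)(y) - (k-h)(z))} u_t(z); at t = 0 all entries agree.
   If (k-h)(y) - (k-h)(z) = n were large, then at the small time t = pi/n the
   entries at y and z would be antipodal, contradicting norm continuity of u
   at 0. *)

Section TrigonometricBounds.
Variable R : realType.

Lemma ge0_derive_ge0 (f df : R -> R) :
  (forall x : R, is_derive x 1 f (df x)) -> f 0 = 0 -> (forall x, 0 < x -> 0 <= df x) ->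
  forall x, 0 <= x -> 0 <= f x.
Proof.
move=> fd f0 df_ge0 x; rewrite le_eqVlt => /predU1P[<-|x_gt0]; first by rewrite f0.
have f_cont : continuous f.
  by move=> y; apply/differentiable_continuous/derivable1_diffP; apply: ex_derive.
have [c] := MVT x_gt0 (fun y _ => fd y) (continuous_subspaceT f_cont).
rewrite in_itv /= => /andP[c_gt0 _] fxE.
rewrite f0 !subr0 in fxE; rewrite fxE.
by apply: mulr_ge0; [exact: df_ge0 | exact: ltW].
Qed.

Lemma sin_le_id (x : R) : 0 <= x -> sin x <= x.
Proof.
move=> x_ge0; rewrite -subr_ge0.
apply: (@ge0_derive_ge0 (fun y => y - sin y) (fun y => 1 - cos y)) => //.
by rewrite sin0 subr0.
Qed.

Lemma one_sub_cos_le_id (x : R) : 0 <= x -> 1 - cos x <= x.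
Proof.
move=> x_ge0; rewrite -subr_ge0.
apply: (@ge0_derive_ge0 (fun y => y - (1 - cos y)) (fun y => 1 - sin y)) => //.
- by move=> y; apply: is_derive_eq; rewrite /GRing.scale /=; lra.
- by rewrite cos0 subrr subr0.
Qed.

Lemma one_sub_cos_le_sqr (x : R) : 0 <= x -> 1 - cos x <= x ^+ 2 / 2.
Proof.
move=> x_ge0; rewrite -subr_ge0.
apply: (@ge0_derive_ge0 (fun y => y ^+ 2 / 2 - (1 - cos y)) (fun y => y - sin y)) => //.
- by move=> y; apply: is_derive_eq; rewrite !scaler0 add0r /GRing.scale /=; lra.
- by rewrite cos0 expr0n /=; lra.
- by move=> y y_gt0; rewrite subr_ge0 sin_le_id // ltW.
Qed.

Lemma id_sub_sin_le_sqr (x : R) : 0 <= x -> x - sin x <= x ^+ 2 / 2.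
Proof.
move=> x_ge0; rewrite -subr_ge0.
apply: (@ge0_derive_ge0 (fun y => y ^+ 2 / 2 - (y - sin y))
                        (fun y => y - (1 - cos y))) => //.
- by move=> y; apply: is_derive_eq; rewrite !scaler0 add0r /GRing.scale /=; lra.
- by rewrite sin0 expr0n /=; lra.
- by move=> y y_gt0; rewrite subr_ge0 one_sub_cos_le_id // ltW.
Qed.

Lemma one_sub_cos_bound (x : R) : 0 <= 1 - cos x <= x ^+ 2 / 2.
Proof.
rewrite subr_ge0 cos_le1 /=; have [x_ge0|x_lt0] := lerP 0 x.
  exact: one_sub_cos_le_sqr.
by rewrite -cosN -sqrrN one_sub_cos_le_sqr // oppr_ge0 ltW.
Qed.

Lemma id_sub_sin_bound (x : R) : `|x - sin x| <= x ^+ 2 / 2.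
Proof.
wlog x_ge0 : x / 0 <= x.
  move=> wlog_x; have [/wlog_x //|x_lt0] := lerP 0 x.
  by rewrite -normrN opprB -sqrrN -[sin x]opprK -sinN addrC wlog_x // oppr_ge0 ltW.
by rewrite ger0_norm ?subr_ge0 ?sin_le_id // id_sub_sin_le_sqr.
Qed.

End TrigonometricBounds.

Section L2Space.
Variables (R : realType) (X : choiceType).
Local Notation C := R[i].
Implicit Types (xi : vec R X) (s : seq X) (T S : op R X).

Lemma sqmod_ge0 (z : C) : 0 <= sqmod z.
Proof. by rewrite addr_ge0 ?sqr_ge0. Qed.

Lemma sqmodM (z w : C) : sqmod (z * w) = sqmod z * sqmod w.
Proof. by case: z => a b; case: w => c e; rewrite /sqmod /=; ring. Qed.

Lemma sqmod0 : sqmod (0 : C) = 0.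
Proof. by rewrite /sqmod /= expr0n /= addr0. Qed.

Lemma sqmod_antipode_far (b c : C) :
  sqmod b = 1 -> sqmod (b - c) <= 1 / 4 -> 1 / 4 < sqmod (- b - c).
Proof. by case: b c => [b1 b2] [c1 c2]; rewrite /sqmod /= => ? ?; nra. Qed.

Definition sumsq xi s : R := \sum_(x <- s) sqmod (xi x).

Lemma sumsq_le_l2nsq xi s : in_l2 xi -> uniq s -> sumsq xi s <= l2nsq xi.
Proof.
move=> [M xi_le] s_uniq; apply: sup_upper_bound; last by exists s.
split; first by exists 0, [::]; rewrite big_nil.
by exists M => _ [s' [s'_uniq ->]]; apply: xi_le.
Qed.

Lemma l2nsq_le xi M : (forall s, uniq s -> sumsq xi s <= M) -> l2nsq xi <= M.
Proof.
move=> xi_le; apply: ge_sup; first by exists 0, [::]; rewrite big_nil.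
by move=> _ [s [s_uniq ->]]; apply: xi_le.
Qed.

Lemma l2nsq_supp1 xi y : (forall w, w != y -> xi w = 0) ->
  in_l2 xi /\ l2nsq xi = sqmod (xi y).
Proof.
move=> xi_supp.
have sumsqE s : uniq s -> sumsq xi s = if y \in s then sqmod (xi y) else 0.
  elim: s => [|a s IHs] /=; first by rewrite /sumsq big_nil.
  move=> /andP[a_notin s_uniq]; rewrite /sumsq big_cons -/(sumsq _ _) IHs // in_cons.
  have [<-|a_neq] := eqVneq a y; first by rewrite (negbTE a_notin) addr0.
  by rewrite xi_supp // sqmod0 add0r.
have sumsq_le s : uniq s -> sumsq xi s <= sqmod (xi y).
  by move=> /sumsqE ->; case: ifP; rewrite ?sqmod_ge0.
have xi_l2 : in_l2 xi by exists (sqmod (xi y)).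
split=> //; apply/eqP; rewrite eq_le (l2nsq_le sumsq_le) /=.
by have := sumsq_le_l2nsq xi_l2 (isT : uniq [:: y]); rewrite sumsqE ?mem_seq1 ?eqxx.
Qed.

Definition delta (y : X) : vec R X := fun w => if w == y then 1 else 0.

Lemma delta_l2 y : in_l2 (delta y) /\ l2nsq (delta y) = 1.
Proof.
have [delta_y_l2 ->] := @l2nsq_supp1 (delta y) y (fun w => ifN_eq _ _).
by rewrite /delta eqxx /sqmod /= expr0n /= addr0 expr1n.
Qed.

Definition mulop (g : X -> C) : op R X := fun xi x => g x * xi x.

Lemma mulop_l2 (g : X -> C) (B : R) xi : 0 <= B -> (forall x, sqmod (g x) <= B) ->
  in_l2 xi -> in_l2 (mulop g xi) /\ l2nsq (mulop g xi) <= B * l2nsq xi.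
Proof.
move=> B_ge0 g_le xi_l2.
have sumsq_le s : uniq s -> sumsq (mulop g xi) s <= B * l2nsq xi.
  move=> s_uniq; apply: le_trans (ler_wpM2l B_ge0 (sumsq_le_l2nsq xi_l2 s_uniq)).
  rewrite /sumsq big_distrr /= ler_sum // => x _.
  by rewrite sqmodM ler_wpM2r ?sqmod_ge0.
by split; [exists (B * l2nsq xi) | apply: l2nsq_le].
Qed.

Lemma opdist_le_mulop T S (g : X -> C) (e : R) :
  (forall xi, in_l2 xi -> forall x, T xi x - S xi x = g x * xi x) ->
  (forall x, sqmod (g x) <= e ^+ 2) -> opdist_le T S e.
Proof.
move=> TSE g_le xi xi_l2; have -> : (fun x => T xi x - S xi x) = mulop g xi.
  by apply: funext => x; rewrite TSE.
exact: mulop_l2 (sqr_ge0 e) g_le xi_l2.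
Qed.

Lemma unitary_opZ (u : op R X) (c : C) xi : unitary_op u -> in_l2 xi ->
  u (fun x => c * xi x) = fun x => c * u xi x.
Proof.
move=> [_ [_ u_lin]] xi_l2; have := u_lin c 0 xi xi xi_l2 xi_l2.
under eq_fun do rewrite mul0r addr0.
by move=> ->; apply: funext => x; rewrite mul0r addr0.
Qed.

End L2Space.

Arguments delta {R X} y _.

Section Phases.
Variables (R : realType) (X : choiceType).
Local Notation C := R[i].
Local Open Scope complex_scope.

Lemma expi_sqmod (a : R) : sqmod (expi a) = 1.
Proof. exact: cos2Dsin2. Qed.

Lemma expi_neq0 (a : R) : expi a != 0.
Proof.
by apply: contra_eq_neq (expi_sqmod a) => ->; rewrite sqmod0 eq_sym oner_eq0.
Qed.

Lemma expiD (a b : R) : expi a * expi b = expi (a + b).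
Proof. by apply/eqP; rewrite eq_complex /= sinD cosD; apply/andP; split; apply/eqP; ring. Qed.

Lemma expi0 : expi 0 = 1 :> C.
Proof. by rewrite /expi cos0 sin0. Qed.

Lemma expipi : expi pi = -1 :> C.
Proof. by apply/eqP; rewrite eq_complex /= cospi sinpi oppr0 !eqxx. Qed.

Lemma expi_sub_sqmod (a b : R) : sqmod (expi a - expi b) <= (a - b) ^+ 2.
Proof.
have /andP[_] := one_sub_cos_bound (a - b); rewrite cosB.
have := cos2Dsin2 a; have := cos2Dsin2 b; rewrite /sqmod /=; nra.
Qed.

Lemma expi_diff_quotient (t m : R) : t != 0 ->
  sqmod ((t^-1)%:C * (expi (t * m) - 1) - 'i * m%:C) <= t ^+ 2 * m ^+ 4 / 2.
Proof.
move=> t_neq0; have /andP[cos_ge cos_le] := one_sub_cos_bound (t * m).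
have := id_sub_sin_bound (t * m); rewrite ler_norml => /andP[sin_ge sin_le].
have -> : sqmod ((t^-1)%:C * (expi (t * m) - 1) - 'i * m%:C) =
    t^-1 ^+ 2 * ((cos (t * m) - 1) ^+ 2 + (t * m - sin (t * m)) ^+ 2).
  by rewrite /sqmod /=; field.
have -> : t ^+ 2 * m ^+ 4 / 2 = t^-1 ^+ 2 * (2 * ((t * m) ^+ 2 / 2) ^+ 2).
  by field.
apply: ler_wpM2l; first exact: sqr_ge0.
have : 0 <= (t * m) ^+ 2 / 2 by rewrite divr_ge0 ?sqr_ge0.
nra.
Qed.

Lemma sumsq_phase (h : X -> R) t xi s : sumsq (phase h t xi) s = sumsq xi s.
Proof. by apply: eq_bigr => x _; rewrite sqmodM expi_sqmod mul1r. Qed.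

Lemma phase_l2 (h : X -> R) t xi : in_l2 xi ->
  in_l2 (phase h t xi) /\ l2nsq (phase h t xi) = l2nsq xi.
Proof.
move=> xi_l2; have phase_l2 : in_l2 (phase h t xi).
  case: xi_l2 => M xi_le; exists M => s s_uniq.
  by change (sumsq (phase h t xi) s <= M); rewrite sumsq_phase; apply: xi_le.
split=> //; apply/eqP; rewrite eq_le; apply/andP; split; apply: l2nsq_le => s s_uniq.
- by rewrite sumsq_phase sumsq_le_l2nsq.
- by rewrite -(sumsq_phase h t) sumsq_le_l2nsq.
Qed.

Lemma phaseD (h : X -> R) t s xi : phase h t (phase h s xi) = phase h (t + s) xi.
Proof. by apply: funext => x; rewrite /phase mulrA expiD mulrDl. Qed.

Lemma phase0 (h : X -> R) xi : phase h 0 xi = xi.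
Proof. by apply: funext => x; rewrite /phase mul0r expi0 mul1r. Qed.

Lemma phase_unitary (h : X -> R) t : unitary_op (phase h t).
Proof.
split; first exact: phase_l2.
split; last by move=> a b xi eta _ _; apply: funext => x; rewrite /phase; ring.
move=> eta eta_l2; exists (phase h (- t) eta); split; first exact: (phase_l2 _ _ eta_l2).1.
by rewrite phaseD subrr phase0.
Qed.

End Phases.

Section UniformRoeAlgebra.
Variables (R : realType) (X : choiceType) (d : X -> X -> R).
Local Notation C := R[i].
Local Open Scope complex_scope.

Definition matrix_unit (z y : X) : X -> option X :=
  fun w => if w == z then Some y else None.

Lemma vop_matrix_unit z y (xi : vec R X) w :
  vop (matrix_unit z y) xi w = if w == y then xi z else 0.
Proof.
rewrite /vop; case: pselect => [e|no_pre].
  by case: (cid e) => x /=; rewrite /matrix_unit; case: eqP => // -> [->]; rewrite eqxx.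
case: eqP => // wy; case: no_pre; exists z; by rewrite /matrix_unit eqxx wy.
Qed.

Lemma matrix_unit_in_CuX z y : in_CuX d (vop (matrix_unit z y)).
Proof.
move=> e e_gt0; exists [:: (1, matrix_unit z y)]; split.
  move=> i; rewrite ltnS leqn0 => /eqP -> /=; split.
    by move=> x1 x2 y'; rewrite /matrix_unit; case: eqP => // -> _; case: eqP.
  by exists (d z y) => x y'; rewrite /matrix_unit; case: eqP => // -> [<-].
apply: (@opdist_le_mulop _ _ _ _ (fun=> 0)) => [xi _ x|x].
  by rewrite /comb big_seq1 mul1r mul0r subrr.
by rewrite sqmod0 sqr_ge0.
Qed.

Definition partial_id (P : pred X) : X -> option X :=
  fun x => if P x then Some x else None.

Lemma vop_partial_id P (xi : vec R X) w :
  vop (partial_id P) xi w = if P w then xi w else 0.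
Proof.
rewrite /vop; case: pselect => [e|no_pre].
  by case: (cid e) => x /=; rewrite /partial_id; case: ifP => // Px [<-]; rewrite Px.
case: ifP => // Pw; case: no_pre; exists w; by rewrite /partial_id Pw.
Qed.

Lemma partial_id_translation P : is_metric d -> partial_translation d (partial_id P).
Proof.
case=> _ d_eq0 _ _; split.
  by move=> x1 x2 y; rewrite /partial_id; do 2 case: ifP => // _; move=> [->] [->].
by exists 0 => x y; rewrite /partial_id; case: ifP => // _ [<-]; rewrite (d_eq0 x x).2.
Qed.

Definition grid (M : nat) : seq int := [seq i%:Z - M%:Z | i <- iota 0 M.*2.+1].

Lemma grid_uniq M : uniq (grid M).
Proof. by rewrite map_inj_uniq ?iota_uniq // => i j /addIr -[]. Qed.

Lemma mem_grid M (j : int) : - (M%:Z) <= j <= M%:Z -> j \in grid M.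
Proof. by move=> j_in; apply/mapP; exists (absz (j + M%:Z)); [rewrite mem_iota|]; lia. Qed.

Definition quant (N : nat) (r : R) : int := Num.floor (r * N%:R).

Lemma quant_err N r : 0 <= r * N%:R - (quant N r)%:~R <= 1.
Proof. by have := floor_le (r * N%:R); have := floorD1_gt (r * N%:R); rewrite intrD /quant; lra. Qed.

Lemma quant_mem_grid N (B r : R) : `|r| <= B ->
  quant N r \in grid (Num.truncn (B * N%:R)).+1.
Proof.
rewrite ler_norml => /andP[r_ge r_le]; apply: mem_grid.
have N_ge0 : 0 <= N%:R :> R by [].
have /andP[q_le q_gt] := floor_itv (r * N%:R); rewrite -/(quant N r) in q_le q_gt.
move: (truncnS_gt (B * N%:R)); set M := (Num.truncn _).+1 => BN_lt.
have q_lt : quant N r < M%:Z by rewrite -(ltr_int R) -pmulrn; nra.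
have q_gt' : - M%:Z < quant N r + 1 by rewrite -(ltr_int R) mulrNz -pmulrn; nra.
lia.
Qed.

Definition quant_approx (N : nat) (r : R) : R := (quant N r)%:~R / N%:R.

Lemma quant_approx_err N r : (0 < N)%N -> 0 <= r - quant_approx N r <= N%:R^-1.
Proof.
move=> N_gt0; have N_pos : 0 < N%:R :> R by rewrite ltr0n.
have -> : r - quant_approx N r = (r * N%:R - (quant N r)%:~R) / N%:R.
  by rewrite /quant_approx; field; rewrite gt_eqF.
have /andP[err_ge err_le] := quant_err N r.
apply/andP; split; first by rewrite divr_ge0 // ltW.
by rewrite -[leRHS]mul1r ler_wpM2r // invr_ge0 ltW.
Qed.

Lemma sum_mul_pick (F : int -> C) (v : C) (L : seq int) j0 : uniq L -> j0 \in L ->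
  \sum_(j <- L) F j * (if j0 == j then v else 0) = F j0 * v.
Proof.
elim: L => [|a L IHL] //= /andP[a_notin L_uniq]; rewrite in_cons big_cons.
have [j0_a|j0_neq] /= := eqVneq j0 a; last by move=> j0_in; rewrite IHL // mulr0 add0r.
move=> _; rewrite -j0_a big1_seq ?addr0 // => j /andP[_ j_in].
by case: eqVneq => [j0_j|_]; [move: a_notin; rewrite -j0_a j0_j j_in | rewrite mulr0].
Qed.

(* Real and imaginary parts of [g] are rounded down to the grid [N^-1 Z]; each
   level set of the rounding contributes a partial identity. *)
Definition grid_comb (N : nat) (L : seq int) (g : X -> C) : seq (C * (X -> option X)) :=
  [seq ((j%:~R / N%:R)%:C, partial_id (fun x => quant N (complex.Re (g x)) == j)) | j <- L] ++
  [seq ('i * (j%:~R / N%:R)%:C, partial_id (fun x => quant N (complex.Im (g x)) == j)) | j <- L].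

Lemma comb_grid_comb N L (g : X -> C) (xi : vec R X) w : uniq L ->
  quant N (complex.Re (g w)) \in L -> quant N (complex.Im (g w)) \in L ->
  comb (grid_comb N L g) xi w =
    ((quant_approx N (complex.Re (g w)))%:C + 'i * (quant_approx N (complex.Im (g w)))%:C) * xi w.
Proof.
move=> L_uniq Re_in Im_in; rewrite /comb big_cat !big_map /=.
under eq_bigr do rewrite vop_partial_id.
under [X in _ + X]eq_bigr do rewrite vop_partial_id.
rewrite (sum_mul_pick (fun j => (j%:~R / N%:R)%:C)) //.
by rewrite (sum_mul_pick (fun j => 'i * (j%:~R / N%:R)%:C)) // mulrDl.
Qed.

Lemma mulop_in_CuX (g : X -> C) (B : R) : is_metric d ->
  (forall x, `|complex.Re (g x)| <= B /\ `|complex.Im (g x)| <= B) -> in_CuX d (mulop g).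
Proof.
move=> d_metric g_bnd e e_gt0.
pose N := (Num.truncn (2 / e)).+1.
have N_inv_lt : N%:R^-1 < e / 2.
  rewrite -[e / 2]invf_div ltf_pV2 ?posrE ?ltr0n ?divr_gt0 //.
  exact: truncnS_gt.
exists (grid_comb N (grid (Num.truncn (B * N%:R)).+1) g); split.
  move=> i /(mem_nth (0, fun=> None)); rewrite mem_cat => /orP[] /mapP[j _ ->];
  exact: partial_id_translation.
apply: opdist_le_mulop => [xi _ x|x].
  by have [Re_le Im_le] := g_bnd x; rewrite comb_grid_comb ?grid_uniq ?quant_mem_grid // -mulrBl.
have /andP[Re_ge Re_le] := quant_approx_err (complex.Re (g x)) (ltn0Sn _ : (0 < N)%N).
have /andP[Im_ge Im_le] := quant_approx_err (complex.Im (g x)) (ltn0Sn _ : (0 < N)%N).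
move: Re_ge Re_le Im_ge Im_le; case: (g x) => a b /=.
rewrite /sqmod /=; nra.
Qed.

End UniformRoeAlgebra.

Section CocycleToClose.
Variables (R : realType) (X : choiceType) (d : X -> X -> R) (h k : X -> R).
Variable u : R -> op R X.
Hypothesis u_unitary : forall t, unitary_op (u t).
Hypothesis u_cont : Defs.norm_continuous u.
Hypothesis u_pert : perturbed_by d (preflow h) (preflow k) u.

Lemma perturbed_matrix_unit t y z w :
  expi (t * k w) * (if w == y then expi (- t * k z) * u t (delta z) z else 0) =
  expi (t * h y) * expi (- t * h z) * u t (delta y) w.
Proof.
have [delta_z_l2 _] := delta_l2 R z; have [delta_y_l2 _] := delta_l2 R y.
have := u_pert t (matrix_unit_in_CuX d z y) delta_z_l2 => /(congr1 (fun xi => xi w)) /=.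
rewrite /preflow {1}/phase vop_matrix_unit => ->.
have -> : phase h t (vop (matrix_unit z y) (phase h (- t) (delta z))) =
    (fun x => expi (t * h y) * expi (- t * h z) * delta y x).
  apply: funext => x; rewrite /phase vop_matrix_unit /delta eqxx.
  by case: eqP => [->|_]; rewrite ?mulr1 ?mulr0 // mulrA.
by rewrite (unitary_opZ _ (u_unitary t) delta_y_l2).
Qed.

Lemma cocycle_column_supp1 t y w : w != y -> u t (delta y) w = 0.
Proof.
move=> w_neq; have := perturbed_matrix_unit t y y w; rewrite (negbTE w_neq) mulr0.
by move=> /esym /eqP; rewrite !mulf_eq0 !(negbTE (expi_neq0 _)) => /eqP.
Qed.

Lemma cocycle_diag_sqmod t y : sqmod (u t (delta y) y) = 1.
Proof.
have [delta_y_l2 delta_y_nsq] := delta_l2 R y.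
have [_ <-] := l2nsq_supp1 (@cocycle_column_supp1 t y).
by rewrite ((u_unitary t).1 _ delta_y_l2).2.
Qed.

Lemma cocycle_diag_shift t y z :
  u t (delta y) y = expi (t * ((k y - h y) - (k z - h z))) * u t (delta z) z.
Proof.
have := perturbed_matrix_unit t y z y; rewrite eqxx !mulrA !expiD => diagE.
apply: (mulfI (expi_neq0 (t * h y + - t * h z))); rewrite -diagE mulrA expiD.
by congr (expi _ * _); ring.
Qed.

Lemma cocycle_diag_near0 : exists2 del : R, 0 < del &
  forall s y, `|s| < del -> sqmod (u s (delta y) y - u 0 (delta y) y) <= 1 / 4.
Proof.
have half_gt0 : 0 < 1 / 2 :> R by rewrite divr_gt0.
have [del del_gt0 u_near] := u_cont 0 half_gt0.
exists del => // s y s_lt; have [delta_y_l2 delta_y_nsq] := delta_l2 R y.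
have s_lt' : `|s - 0| < del by rewrite subr0.
have [_] := u_near s s_lt' (delta y) delta_y_l2.
have diff_supp w : w != y -> u s (delta y) w - u 0 (delta y) w = 0.
  by move=> w_neq; rewrite !cocycle_column_supp1 ?subrr.
have -> : (1 / 2) ^+ 2 = 1 / 4 :> R by field.
by rewrite (l2nsq_supp1 diff_supp).2 delta_y_nsq mulr1.
Qed.

Lemma cocycle_perturbation_close_maps : close_maps h k.
Proof.
have [[z0 _]|X_empty] := pselect (exists z : X, True); last first.
  by exists 0 => x; case: X_empty; exists x.
have [del del_gt0 u_near] := cocycle_diag_near0.
have gap_le y : `|(k y - h y) - (k z0 - h z0)| <= pi / del.
  rewrite leNgt; apply/negP; set n := _ - _ => gap_gt.
  have n_neq0 : n != 0.
    by apply: contraTneq gap_gt => ->; rewrite normr0 -leNgt ltW // divr_gt0 // pi_gt0.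
  pose s := pi / n.
  have s_lt : `|s| < del.
    by rewrite normf_div gtr0_norm ?pi_gt0 // ltr_pdivrMr ?normr_gt0 // mulrC -ltr_pdivrMr.
  have antipode : u s (delta y) y = - u s (delta z0) z0.
    by rewrite (cocycle_diag_shift s y z0) -/n divfK // expipi mulN1r.
  have diag0 : u 0 (delta y) y = u 0 (delta z0) z0.
    by rewrite (cocycle_diag_shift 0 y z0) mul0r expi0 mul1r.
  have := sqmod_antipode_far (cocycle_diag_sqmod s z0) (u_near s z0 s_lt).
  by rewrite -antipode -diag0 ltNge u_near.
exists (pi / del + `|h z0 - k z0|) => y.
have := gap_le y; rewrite ler_norml => /andP[gap_ge gap_le'].
have := ler_norm (h z0 - k z0); have := ler_norm (- (h z0 - k z0)); rewrite normrN.
by rewrite ler_norml; lra.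
Qed.

End CocycleToClose.

Section CloseToInner.
Variables (R : realType) (X : choiceType) (d : X -> X -> R).
Hypothesis d_metric : is_metric d.
Local Open Scope complex_scope.

Lemma phase_in_CuX (m : X -> R) t : in_CuX d (phase m t).
Proof.
apply: (@mulop_in_CuX _ _ d (fun x => expi (t * m x)) 1) => // x.
by rewrite cos_max sin_max.
Qed.

Lemma phase_cocycle_eq (h m : X -> R) t s xi :
  phase m (t + s) xi = phase m t (preflow h t (phase m s) xi).
Proof.
apply: funext => x; rewrite /preflow /phase !mulrA !expiD.
by congr (expi _ * _); ring.
Qed.

Lemma phase_perturbs (h k : X -> R) :
  perturbed_by d (preflow h) (preflow k) (phase (fun x => k x - h x)).
Proof.
move=> t a _ xi _; rewrite /preflow.
have -> : phase k (- t) (phase (fun x => k x - h x) t xi) = phase h (- t) xi.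
  by apply: funext => x; rewrite /phase mulrA expiD; congr (expi _ * _); ring.
by apply: funext => x; rewrite /phase mulrA expiD; congr (expi _ * _); ring.
Qed.

Variables (m : X -> R) (K : R).
Hypotheses (K_gt0 : 0 < K) (m_le : forall x, `|m x| <= K).

Let m_sqr_le x : m x ^+ 2 <= K ^+ 2.
Proof. by have := m_le x; rewrite ler_norml => /andP[? ?]; nra. Qed.

Lemma phase_norm_continuous : Defs.norm_continuous (phase m).
Proof.
move=> t e e_gt0; exists (e / K) => [|s st_lt]; first by rewrite divr_gt0.
apply: (@opdist_le_mulop _ _ _ _ (fun x => expi (s * m x) - expi (t * m x))).
  by move=> xi _ x; rewrite /phase mulrBl.
move=> x; apply: le_trans (expi_sub_sqmod _ _) _.
have : `|s - t| * `|m x| <= e.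
  rewrite -[e](divfK (lt0r_neq0 K_gt0)).
  by apply: ler_pM => //; exact: ltW.
have -> : s * m x - t * m x = (s - t) * m x by ring.
rewrite -real_normK ?num_real // normrM => st_m_le.
by apply: lerXn2r; rewrite // nnegrE ?mulr_ge0 // ltW.
Qed.

Lemma phase_differentiable_at0 : differentiable_at0 (phase m).
Proof.
exists (mulop (fun x => 'i * (m x)%:C)).
  exists K; apply: (@opdist_le_mulop _ _ _ _ (fun x => 'i * (m x)%:C)).
    by move=> xi _ x; rewrite /opzero subr0.
  by move=> x; rewrite /sqmod /=; have := m_sqr_le x; lra.
move=> e e_gt0; exists (e / K ^+ 2) => [|t t_neq0 t_lt]; first by rewrite divr_gt0 ?exprn_gt0.
apply: (@opdist_le_mulop _ _ _ _
  (fun x => (t^-1)%:C * (expi (t * m x) - 1) - 'i * (m x)%:C)).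
  by move=> xi _ x; rewrite /phase /mulop mul0r expi0; ring.
move=> x; apply: le_trans (expi_diff_quotient _ t_neq0) _.
have tK_lt : `|t| * K ^+ 2 < e by rewrite -ltr_pdivlMr // exprn_gt0.
have tm_le : `|t| * m x ^+ 2 <= `|t| * K ^+ 2 by rewrite ler_wpM2l.
have tm_ge0 : 0 <= `|t| * m x ^+ 2 by rewrite mulr_ge0 ?sqr_ge0.
have -> : t ^+ 2 * m x ^+ 4 / 2 = (`|t| * m x ^+ 2) ^+ 2 / 2.
  by rewrite exprMn real_normK ?num_real // -exprM.
nra.
Qed.

Lemma phase_is_cocycle (h : X -> R) : is_cocycle d (preflow h) (phase m).
Proof.
split; [|exact: phase_norm_continuous|by move=> t s xi _; apply: phase_cocycle_eq].
by move=> t; split; [apply: phase_in_CuX|apply: phase_unitary].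
Qed.

End CloseToInner.

Lemma close_maps_sym (R : realType) (X : choiceType) (h k : X -> R) :
  close_maps h k -> close_maps k h.
Proof. by case=> M hkM; exists M => x; rewrite distrC. Qed.

Lemma close_maps_inner_perturbation (R : realType) (X : choiceType) (d : X -> X -> R)
  (h k : X -> R) : is_metric d -> close_maps h k ->
  inner_perturbation d (preflow h) (preflow k).
Proof.
move=> d_metric [M hkM]; pose m x := k x - h x.
have K_gt0 : 0 < `|M| + 1 by rewrite ltr_pwDr ?normr_ge0.
have m_le x : `|m x| <= `|M| + 1.
  by rewrite distrC (le_trans (hkM x)) // (le_trans (ler_norm M)) // lerDl.
exists (phase m); split.
- exact: (phase_is_cocycle d_metric K_gt0).
- exact: (phase_differentiable_at0 K_gt0 m_le).
- exact: phase_perturbs.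
Qed.

Lemma inner_perturbation_cocycle (R : realType) (X : choiceType) (d : X -> X -> R)
  (sigma rho : R -> op R X -> op R X) :
  inner_perturbation d sigma rho -> cocycle_perturbation d sigma rho.
Proof. by case=> u [u_cocycle _ u_pert]; exists u. Qed.

Lemma cocycle_perturbation_preflow_close (R : realType) (X : choiceType)
  (d : X -> X -> R) (h k : X -> R) :
  cocycle_perturbation d (preflow h) (preflow k) -> close_maps h k.
Proof.
case=> u [[u_CuX_unitary u_cont _] u_pert].
exact: (cocycle_perturbation_close_maps (fun t => (u_CuX_unitary t).2) u_cont u_pert).
Qed.

Theorem theorem1p4p4 (R : realType) (X : choiceType) (d : X -> X -> R)
  (hd : is_metric d) (hulf : unif_loc_finite d) (h k : X -> R) :
  (close_maps h k <->
     inner_perturbation d (preflow h) (preflow k) /\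
     inner_perturbation d (preflow k) (preflow h)) /\
  (close_maps h k <->
     cocycle_perturbation d (preflow h) (preflow k) /\
     cocycle_perturbation d (preflow k) (preflow h)).
Proof.
have close_inner : close_maps h k ->
    inner_perturbation d (preflow h) (preflow k) /\
    inner_perturbation d (preflow k) (preflow h).
  by move=> hk; split; apply: close_maps_inner_perturbation => //; apply: close_maps_sym.
split; split.
- exact: close_inner.
- by case=> /inner_perturbation_cocycle /cocycle_perturbation_preflow_close.
- by move=> /close_inner [/inner_perturbation_cocycle ? /inner_perturbation_cocycle ?].
- by case=> /cocycle_perturbation_preflow_close.
Qed.
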